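(* Let $r\ge1$ and $n\in\mathbb{Z}_{>0}$. Every $\omega\in\Omega^r_n$ satisfies $|\xi|\le|\omega|\le|\xi|\,|\pi|^{-n}$.
   Context: Let $F$ be a global function field, $\infty$ a place of $F$, $\pi$ a uniformizer at $\infty$, $F_\infty$ the completion at $\infty$, $\mathbb{C}_\infty$ the completion of an algebraic closure of $F_\infty$ with absolute value $|\cdot|$. Fix $\xi\in\mathbb{C}_\infty^\times$. $\Omega^r$ is the set of column vectors $\omega=(\omega_1,\dots,\omega_r)^T\in\mathbb{C}_\infty^r$ with $F_\infty$-linearly independent entries and $\omega_r=\xi$. A linear form $F_\infty^r\to F_\infty$ is unimodular if its largest coefficient has absolute value $1$. Put $|\omega|:=\max_i|\omega_i|$, $h(\omega):=|\omega|^{-1}\inf\{|\ell(\omega)|:\ell$ a unimodular $F_\infty$-linear form$\}$, and $\Omega^r_n:=\{\omega\in\Omega^r:h(\omega)\ge|\pi|^n\}$. *)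

From HB Require Import structures.
From mathcomp Require Import all_boot all_order all_algebra.
From mathcomp Require Import all_classical all_reals.
Set Implicit Arguments. Unset Strict Implicit. Unset Printing Implicit Defensive.
Import Order.TTheory GRing.Theory Num.Theory.
Local Open Scope ring_scope.
Local Open Scope classical_set_scope.

Section Defs.
Variables (R : realType) (C : closedFieldType) (abs : C -> R).

Definition is_nonarch_abs : Prop :=
  [/\ forall x, 0 <= abs x,
      forall x, abs x = 0 <-> x = 0,
      forall x y, abs (x * y) = abs x * abs y &
      forall x y, abs (x + y) <= Num.max (abs x) (abs y)].

Definition abs_cauchy (u : nat -> C) : Prop :=
  forall e : R, 0 < e -> exists N, forall m n, (N <= m)%N -> (N <= n)%N ->
    abs (u m - u n) < e.

Definition abs_converges_to (u : nat -> C) (l : C) : Prop :=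
  forall e : R, 0 < e -> exists N, forall n, (N <= n)%N -> abs (u n - l) < e.

Definition abs_complete_in (K : C -> Prop) : Prop :=
  forall u : nat -> C, (forall n, K (u n)) -> abs_cauchy u ->
    exists2 l, K l & abs_converges_to u l.

Definition is_subfield (K : C -> Prop) : Prop :=
  [/\ K 0, K 1, forall x y, K x -> K y -> K (x - y),
      forall x y, K x -> K y -> K (x * y) &
      forall x, K x -> K x^-1].

(* Standing setting: C = C_infty (algebraically closed, complete), K = F_infty
   a complete subfield, discretely valued with uniformizer pi. *)
Definition function_field_setting (K : C -> Prop) (pi : C) : Prop :=
  [/\ is_nonarch_abs, abs_complete_in (fun _ => True),
      is_subfield K, abs_complete_in K &
      [/\ K pi, 0 < abs pi, abs pi < 1 &
          forall x, K x -> x <> 0 -> exists k : int, abs x = abs pi ^ k]].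

Variable K : C -> Prop.

Definition K_lin_indep (r : nat) (w : 'cV[C]_r) : Prop :=
  forall a : 'I_r -> C, (forall i, K (a i)) ->
    \sum_i a i * w i 0 = 0 -> forall i, a i = 0.

Definition Omega (r : nat) (xi : C) : set 'cV[C]_r :=
  [set w | K_lin_indep w /\ forall i : 'I_r, val i = r.-1 -> w i 0 = xi].

Definition unimodular (r : nat) (a : 'I_r -> C) : Prop :=
  (forall i, K (a i)) /\ \big[Num.max/0]_i abs (a i) = 1.

Definition lform (r : nat) (a : 'I_r -> C) (w : 'cV[C]_r) : C :=
  \sum_i a i * w i 0.

Definition vnorm (r : nat) (w : 'cV[C]_r) : R := \big[Num.max/0]_i abs (w i 0).

Definition hgt (r : nat) (w : 'cV[C]_r) : R :=
  (vnorm w)^-1 * inf [set abs (lform a w) | a in [set a | unimodular a]].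

Definition Omega_n (r : nat) (xi pi : C) (n : nat) : set 'cV[C]_r :=
  [set w | @Omega r xi w /\ abs pi ^+ n <= hgt w].

End Defs.

From HB Require Import structures.
From mathcomp Require Import all_boot all_order all_algebra.
From mathcomp Require Import all_classical all_reals.
Import Order.TTheory GRing.Theory Num.Theory.
Local Open Scope ring_scope.
Local Open Scope classical_set_scope.

(* The entry xi of omega is bounded by |omega|, which gives the lower bound.
   For the upper bound, the coordinate form picking out the last entry is
   unimodular, so the infimum in h(omega) is at most |xi|; hence
   |pi|^n <= h(omega) <= |xi| / |omega|. *)

Section NonarchAbs.
Context {R : realType} {C : closedFieldType} {abs : C -> R}.
Hypothesis abs_nonarch : is_nonarch_abs abs.

Lemma abs_ge0 (x : C) : 0 <= abs x.
Proof. by case: abs_nonarch. Qed.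

Lemma abs0 : abs 0 = 0.
Proof. by case: abs_nonarch => _ abs_eq0 _ _; apply/abs_eq0. Qed.

Lemma abs_gt0 {x : C} : x <> 0 -> 0 < abs x.
Proof.
case: abs_nonarch => _ abs_eq0 _ _ x_neq0.
by rewrite lt_def abs_ge0 andbT; apply/eqP => /abs_eq0.
Qed.

Lemma abs1 : abs 1 = 1.
Proof.
case: abs_nonarch => _ _ absM _.
have abs1_neq0 : abs 1 != 0.
  by rewrite gt_eqF // abs_gt0 //; apply/eqP/oner_neq0.
by apply: (mulfI abs1_neq0); rewrite -absM !mulr1.
Qed.

Lemma vnorm_ge_entry (r : nat) (w : 'cV[C]_r) (i : 'I_r) :
  abs (w i 0) <= vnorm abs w.
Proof. exact: le_bigmax. Qed.

Context {K : C -> Prop}.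
Hypotheses (K0 : K 0) (K1 : K 1).

Definition coord_form {r : nat} (i0 : 'I_r) : 'I_r -> C :=
  fun i => (i == i0)%:R.

Lemma lform_coord (r : nat) (i0 : 'I_r) (w : 'cV[C]_r) :
  lform (coord_form i0) w = w i0 0.
Proof.
rewrite /lform (bigD1 i0) //= big1 ?addr0 /coord_form ?eqxx ?mul1r //.
by move=> i /negbTE ->; rewrite mul0r.
Qed.

Lemma unimodular_coord (r : nat) (i0 : 'I_r) :
  unimodular abs K (coord_form i0).
Proof.
split=> [i|]; first by rewrite /coord_form; case: (i == i0).
apply/le_anti/andP; split.
  by apply: bigmax_le => // i _; rewrite /coord_form; case: (i == i0);
    rewrite ?abs1 ?abs0.
by apply: le_trans (le_bigmax _ _ i0); rewrite /coord_form eqxx abs1.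
Qed.

Lemma hgt_le_entry {r : nat} {w : 'cV[C]_r} (i0 : 'I_r) :
  0 < vnorm abs w -> hgt abs K w <= abs (w i0 0) / vnorm abs w.
Proof.
move=> vnorm_gt0; rewrite /hgt mulrC ler_pM2r ?invr_gt0 //.
apply: ge_inf; first by exists 0 => _ [a _ <-]; apply: abs_ge0.
by exists (coord_form i0); [apply: unimodular_coord | rewrite lform_coord].
Qed.

End NonarchAbs.

Lemma Omega_last_entry {C : closedFieldType} {K : C -> Prop} {r : nat}
    {xi : C} {w : 'cV[C]_r} :
  (0 < r)%N -> Omega K xi w -> exists i : 'I_r, w i 0 = xi.
Proof.
move=> r_gt0 [_ w_last].
have last_lt : (r.-1 < r)%N by rewrite prednK.
by exists (Ordinal last_lt); apply: w_last.
Qed.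

Theorem lemma3p3 (R : realType) (C : closedFieldType) (abs : C -> R)
  (K : C -> Prop) (pi xi : C) (r n : nat) :
  function_field_setting abs K pi -> xi <> 0 ->
  (1 <= r)%N -> (0 < n)%N ->
  forall w : 'cV[C]_r, @Omega_n R C abs K r xi pi n w ->
    abs xi <= vnorm abs w /\ vnorm abs w <= abs xi * (abs pi ^+ n)^-1.
Proof.
move=> [abs_nonarch _ [K0 K1 _ _ _] _ [_ pi_gt0 _ _]] xi_neq0 r_gt0 _ w.
move=> [w_Omega hgt_ge].
have [i0 w_i0] := Omega_last_entry r_gt0 w_Omega.
have xi_le : abs xi <= vnorm abs w by rewrite -w_i0 vnorm_ge_entry.
split=> //.
have vnorm_gt0 : 0 < vnorm abs w.
  exact: lt_le_trans (abs_gt0 abs_nonarch xi_neq0) xi_le.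
have := hgt_le_entry abs_nonarch K0 K1 i0 vnorm_gt0.
rewrite w_i0 => /(le_trans hgt_ge).
by rewrite ler_pdivlMr // mulrC -ler_pdivlMr ?exprn_gt0 // mulrC.
Qed.
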